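(* Let $(G_k)_{k\in\mathbb Z}$ be a gibonacci sequence, let $\lambda = G_1^2 - G_0G_2$, and let $F_k$ denote the Fibonacci numbers. For every positive integer $n$ and all integers $t$ and $m$, \begin{equation*} \begin{split} &220\sum_{j = 1}^n G_{j + t - 1} G_{j + t} G_{j + t + 1} G_{j + t + 2} G_{j + t + m}\\ &\quad = \left(F_{m + 2} + F_{m - 3}\right)\Big(-\left(G_{n + t + 3}^5 - G_{t + 3}^5\right) + 7\left(G_{n + t + 2}^5 - G_{t + 2}^5\right) + 47\left(G_{n + t + 1}^5 - G_{t + 1}^5\right)\\ &\qquad\qquad + 31\left(G_{n + t}^5 - G_t^5\right) - 9\left(G_{n + t - 1}^5 - G_{t - 1}^5\right) - \left(G_{n + t - 2}^5 - G_{t - 2}^5\right)\Big)\\ &\qquad - 44\lambda^2\left(F_{m + 2} + F_{m - 3}\right)\left(G_{n + t + 2} - G_{t + 2}\right) - 44F_{m + 2}\left(G_{t + 1}^5 - \lambda^2 G_{t + 1}\right) + 44F_{m + 2}\left(G_{n + t + 1}^5 - \lambda^2 G_{n + t + 1}\right) \end{split} \end{equation*} and \begin{equation*} \begin{split} &220\sum_{j = 1}^n (-1)^{j - 1}G_{j + t - 1} G_{j + t} G_{j + t + 1} G_{j + t + 2} G_{j + t + m}\\ &\quad = -\left(F_{m + 2} - F_{m - 3}\right)\Big(-\left((-1)^{n + 1}G_{n + t + 3}^5 + G_{t + 3}^5\right) + 9\left((-1)^{n + 1}G_{n + t + 2}^5 + G_{t + 2}^5\right)\\ &\qquad\qquad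 + 31\left((-1)^{n + 1}G_{n + t + 1}^5 + G_{t + 1}^5\right) - 47\left((-1)^{n + 1}G_{n + t}^5 + G_t^5\right)\\ &\qquad\qquad + 7\left((-1)^{n + 1}G_{n + t - 1}^5 + G_{t - 1}^5\right) + \left((-1)^{n + 1}G_{n + t - 2}^5 + G_{t - 2}^5\right)\Big)\\ &\qquad + 44\lambda^2\left(F_{m + 2} - F_{m - 3}\right)\left((-1)^{n + 1}G_{n + t - 1} + G_{t - 1}\right) + 44F_{m + 2}\left(G_{t + 1}^5 - \lambda^2 G_{t + 1}\right)\\ &\qquad + 44F_{m + 2}(-1)^{n + 1}\left(G_{n + t + 1}^5 - \lambda^2 G_{n + t + 1}\right). \end{split} \end{equation*}
   Context: A gibonacci sequence $(G_k)_{k\in\mathbb Z}$ is defined by arbitrary initial values $G_0=a$, $G_1=b$ (numbers, not both zero) and $G_k=G_{k-1}+G_{k-2}$ for all integers $k$. The Fibonacci numbers $F_k$ are the gibonacci sequence with $F_0=0$, $F_1=1$, extended to all integer indices by the same recurrence (so $F_{-k}=(-1)^{k+1}F_k$). *)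

From mathcomp Require Import all_boot all_order all_algebra.
Set Implicit Arguments. Unset Strict Implicit. Unset Printing Implicit Defensive.
Import Order.TTheory GRing.Theory Num.Theory.
Local Open Scope ring_scope.

Fixpoint fibn (n : nat) : nat :=
  match n with
  | 0 => 0
  | 1 => 1
  | (k.+1 as m).+1 => fibn m + fibn k
  end%N.

(* Fibonacci numbers extended to all integers: F_{-k} = (-1)^(k+1) F_k.
   Negz n denotes -(n+1). *)
Definition fibz (k : int) : int :=
  match k with
  | Posz n => (fibn n)%:Z
  | Negz n => (-1) ^+ n.+2 * (fibn n.+1)%:Z
  end.

Definition gibonacci (R : pzRingType) (G : int -> R) : Prop :=
  (forall k : int, G k = G (k - 1) + G (k - 2)) /\ (G 0 != 0 \/ G 1 != 0).

From mathcomp Require Import all_boot all_order all_algebra.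
From mathcomp Require Import zify ring.
Set Implicit Arguments. Unset Strict Implicit. Unset Printing Implicit Defensive.
Import GRing.Theory.
Local Open Scope ring_scope.

(** Both sums telescope.  Every [G (k + c)] is a combination of [G k] and
    [G (k + 1)] with Fibonacci coefficients, and the Cassini quantity
    [G (k + 1)^2 - G k G (k + 2)] only changes sign with [k], so its square is
    the constant [lam^2].  After these substitutions, 220 times the summand at
    [k] is [P k - P (k - 1)] (resp. [Q k + Q (k - 1)]) for the quintic [P]
    (resp. [Q]) read off the right-hand side: a polynomial identity in [G k],
    [G (k + 1)], [F m] and [F (m + 1)]. *)

Local Notation fibr k := ((fibz k)%:~R).

Lemma int_ind_shift (P : int -> Prop) :
  P 0 -> (forall k, P k <-> P (k + 1)) -> forall k, P k.
Proof.
move=> P0 PS; elim/int_ind => [//|n Pn|n Pn].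
  by rewrite intS addrC; apply/(PS n).1.
by apply/(PS _).2; rewrite (_ : - n.+1%:Z + 1 = - n%:Z) //; lia.
Qed.

Lemma fibzSS k : fibz (k + 2) = fibz (k + 1) + fibz k.
Proof.
case: k => [n|[|[|n]]]; [|by []|by []|].
  have -> : n%:Z + 2 = n.+2%:Z by lia.
  have -> : n%:Z + 1 = n.+1%:Z by lia.
  by rewrite /= PoszD.
have -> : Negz n.+2 + 2 = Negz n by rewrite !NegzE; lia.
have -> : Negz n.+2 + 1 = Negz n.+1 by rewrite !NegzE; lia.
by rewrite /= PoszD !exprS; ring.
Qed.

Lemma fibrSS (R : pzRingType) k : fibr (k + 2) = fibr (k + 1) + fibr k :> R.
Proof. by rewrite fibzSS intrD. Qed.

Lemma telescope_sum_shift (V : zmodType) (u : nat -> V) (f : int -> V) t n :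
  (forall j, u j = f (j%:Z + t) - f (j%:Z + t - 1)) ->
  \sum_(1 <= j < n.+1) u j = f (n%:Z + t) - f t.
Proof.
move=> du; elim: n => [|n IH]; first by rewrite big_geq // add0r subrr.
rewrite big_nat_recr //= IH du (_ : n.+1%:Z + t - 1 = n%:Z + t); last by lia.
by rewrite addrC addrA subrK.
Qed.

Lemma alt_telescope_sum_shift (R : comPzRingType) (u : nat -> R) f t n :
  (forall j, u j = (-1) ^+ j.-1 * (f (j%:Z + t) + f (j%:Z + t - 1))) ->
  \sum_(1 <= j < n.+1) u j = (-1) ^+ n.+1 * f (n%:Z + t) + f t.
Proof.
move=> du; elim: n => [|n IH].
  by rewrite big_geq // add0r expr1 mulN1r addNr.
rewrite big_nat_recr //= IH du (_ : n.+1%:Z + t - 1 = n%:Z + t); last by lia.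
by rewrite !exprS; ring.
Qed.

Section Recurrence.

Variables (V : zmodType) (f g : int -> V).
Hypotheses (recf : forall k, f (k + 2) = f (k + 1) + f k)
           (recg : forall k, g (k + 2) = g (k + 1) + g k).

Lemma fib_rec_eq : f 0 = g 0 -> f 1 = g 1 -> f =1 g.
Proof.
move=> eq0 eq1 k.
suff /(_ k)[] : forall k, f k = g k /\ f (k + 1) = g (k + 1) by [].
apply: int_ind_shift => // {}k; split=> [[eqk eqk1] | [eqk1 eqk2]].
  by rewrite -addrA recf recg eqk eqk1.
split=> //; apply: (addrI (f (k + 1))).
by rewrite -recf eqk1 -recg -[2]/(1 + 1) addrA.
Qed.

End Recurrence.

Section Gibonacci.

Variables (R : comPzRingType) (G : int -> R).
Hypothesis gibG : forall k, G (k + 2) = G (k + 1) + G k.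

Lemma gibD k c : G (k + c) = fibr c * G (k + 1) + fibr (c - 1) * G k.
Proof.
move: c; apply: (@fib_rec_eq _ (fun c => G (k + c))) => [c|c||].
- by rewrite addrA gibG -addrA.
- rewrite (_ : c + 2 - 1 = c - 1 + 2); last by rewrite addrAC.
  rewrite (_ : c + 1 - 1 = c - 1 + 1); last by rewrite addrAC.
  by rewrite !fibrSS subrK; ring.
- have -> : fibz 0 = 0 by [].
  have -> : fibz (0 - 1) = 1 by [].
  by rewrite addr0; ring.
- have -> : fibz 1 = 1 by [].
  have -> : fibz (1 - 1) = 0 by [].
  ring.
Qed.

Lemma gib_window k :
  [/\ G (k + 3) = G (k + 1) *+ 2 + G k, G (k + 2) = G (k + 1) + G k,
      G (k - 1) = G (k + 1) - G k, G (k - 2) = G k *+ 2 - G (k + 1)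
    & G (k - 3) = G (k + 1) *+ 2 - G k *+ 3].
Proof. by split; rewrite gibD /=; ring. Qed.

Lemma gib_cassini_sqr k :
  (G (k + 1) ^+ 2 - G k * G (k + 2)) ^+ 2 = (G 1 ^+ 2 - G 0 * G 2) ^+ 2.
Proof.
elim/int_ind_shift: k => [|k]; first by rewrite !add0r.
suff -> : (G (k + 1 + 1) ^+ 2 - G (k + 1) * G (k + 1 + 2)) ^+ 2
        = (G (k + 1) ^+ 2 - G k * G (k + 2)) ^+ 2 by [].
have [G3 G2 _ _ _] := gib_window k.
by rewrite -!addrA G3 G2; ring.
Qed.

End Gibonacci.

Section FifthPowerSums.

Variables (R : comPzRingType) (G : int -> R) (m : int).
Hypothesis gibG : forall k, G (k + 2) = G (k + 1) + G k.

Local Notation lam := (G 1 ^+ 2 - G 0 * G 2).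

Definition fifth_antidiff k : R :=
  (fibr (m + 2) + fibr (m - 3)) *
    (- G (k + 3) ^+ 5 + 7 * G (k + 2) ^+ 5 + 47 * G (k + 1) ^+ 5
     + 31 * G k ^+ 5 - 9 * G (k - 1) ^+ 5 - G (k - 2) ^+ 5)
  - 44 * lam ^+ 2 * (fibr (m + 2) + fibr (m - 3)) * G (k + 2)
  + 44 * fibr (m + 2) * (G (k + 1) ^+ 5 - lam ^+ 2 * G (k + 1)).

Definition fifth_alt_antidiff k : R :=
  - (fibr (m + 2) - fibr (m - 3)) *
    (- G (k + 3) ^+ 5 + 9 * G (k + 2) ^+ 5 + 31 * G (k + 1) ^+ 5
     - 47 * G k ^+ 5 + 7 * G (k - 1) ^+ 5 + G (k - 2) ^+ 5)
  + 44 * lam ^+ 2 * (fibr (m + 2) - fibr (m - 3)) * G (k - 1)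
  + 44 * fibr (m + 2) * (G (k + 1) ^+ 5 - lam ^+ 2 * G (k + 1)).

Lemma fifth_sum_step k :
  220 * (G (k - 1) * G k * G (k + 1) * G (k + 2) * G (k + m))
  = fifth_antidiff k - fifth_antidiff (k - 1).
Proof.
have [G3 G2 Gm1 Gm2 Gm3] := gib_window gibG k.
have [_ F2 Fm1 _ Fm3] := gib_window (@fibrSS R) m.
rewrite /fifth_antidiff -(gib_cassini_sqr gibG k) subrK -!(addrA k).
rewrite (_ : -1 + 2 = 1 :> int) // G3 G2 Gm1 Gm2 Gm3 (gibD gibG k m) F2 Fm3 Fm1.
ring.
Qed.

Lemma fifth_altsum_step k :
  220 * (G (k - 1) * G k * G (k + 1) * G (k + 2) * G (k + m))
  = fifth_alt_antidiff k + fifth_alt_antidiff (k - 1).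
Proof.
have [G3 G2 Gm1 Gm2 Gm3] := gib_window gibG k.
have [_ F2 Fm1 _ Fm3] := gib_window (@fibrSS R) m.
rewrite /fifth_alt_antidiff -(gib_cassini_sqr gibG k) subrK -!(addrA k).
rewrite (_ : -1 + 2 = 1 :> int) // G3 G2 Gm1 Gm2 Gm3 (gibD gibG k m) F2 Fm3 Fm1.
ring.
Qed.

End FifthPowerSums.

Lemma gibonacci_rec (R : pzRingType) (G : int -> R) :
  gibonacci G -> forall k, G (k + 2) = G (k + 1) + G k.
Proof. by case=> Grec _ k; rewrite Grec addrK -addrA. Qed.

Theorem theorem1 (R : numFieldType) (G : int -> R) (n : nat) (t m : int) :
  gibonacci G -> (0 < n)%N ->
  let lam := G 1 ^+ 2 - G 0 * G 2 in
  let F (k : int) : R := (fibz k)%:~R in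
  (220 * \sum_(1 <= j < n.+1)
      G (j%:Z + t - 1) * G (j%:Z + t) * G (j%:Z + t + 1) * G (j%:Z + t + 2)
        * G (j%:Z + t + m)
   = (F (m + 2) + F (m - 3)) *
       (- (G (n%:Z + t + 3) ^+ 5 - G (t + 3) ^+ 5)
        + 7 * (G (n%:Z + t + 2) ^+ 5 - G (t + 2) ^+ 5)
        + 47 * (G (n%:Z + t + 1) ^+ 5 - G (t + 1) ^+ 5)
        + 31 * (G (n%:Z + t) ^+ 5 - G t ^+ 5)
        - 9 * (G (n%:Z + t - 1) ^+ 5 - G (t - 1) ^+ 5)
        - (G (n%:Z + t - 2) ^+ 5 - G (t - 2) ^+ 5))
     - 44 * lam ^+ 2 * (F (m + 2) + F (m - 3)) * (G (n%:Z + t + 2) - G (t + 2))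
     - 44 * F (m + 2) * (G (t + 1) ^+ 5 - lam ^+ 2 * G (t + 1))
     + 44 * F (m + 2) * (G (n%:Z + t + 1) ^+ 5 - lam ^+ 2 * G (n%:Z + t + 1)))
  /\
  (220 * \sum_(1 <= j < n.+1)
      (-1) ^+ j.-1 * G (j%:Z + t - 1) * G (j%:Z + t) * G (j%:Z + t + 1)
        * G (j%:Z + t + 2) * G (j%:Z + t + m)
   = - (F (m + 2) - F (m - 3)) *
       (- ((-1) ^+ n.+1 * G (n%:Z + t + 3) ^+ 5 + G (t + 3) ^+ 5)
        + 9 * ((-1) ^+ n.+1 * G (n%:Z + t + 2) ^+ 5 + G (t + 2) ^+ 5)
        + 31 * ((-1) ^+ n.+1 * G (n%:Z + t + 1) ^+ 5 + G (t + 1) ^+ 5)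
        - 47 * ((-1) ^+ n.+1 * G (n%:Z + t) ^+ 5 + G t ^+ 5)
        + 7 * ((-1) ^+ n.+1 * G (n%:Z + t - 1) ^+ 5 + G (t - 1) ^+ 5)
        + ((-1) ^+ n.+1 * G (n%:Z + t - 2) ^+ 5 + G (t - 2) ^+ 5))
     + 44 * lam ^+ 2 * (F (m + 2) - F (m - 3))
         * ((-1) ^+ n.+1 * G (n%:Z + t - 1) + G (t - 1))
     + 44 * F (m + 2) * (G (t + 1) ^+ 5 - lam ^+ 2 * G (t + 1))
     + 44 * F (m + 2) * (-1) ^+ n.+1
         * (G (n%:Z + t + 1) ^+ 5 - lam ^+ 2 * G (n%:Z + t + 1))).
Proof.
move=> /gibonacci_rec gibG _ lam F; rewrite {}/lam {}/F.
split; rewrite mulr_sumr.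
- rewrite (telescope_sum_shift (f := fifth_antidiff G m) (t := t)) => [|j].
    by rewrite /fifth_antidiff; ring.
  exact: fifth_sum_step.
- rewrite (alt_telescope_sum_shift (f := fifth_alt_antidiff G m) (t := t)) => [|j].
    by rewrite /fifth_alt_antidiff; ring.
  by rewrite -fifth_altsum_step //; ring.
Qed.
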